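(* Let $G=(V,E)$ be a finite simple graph with directed edge set $\vec E$ (each undirected edge yields two opposite directed edges; $o(e)$, $t(e)$ are origin and terminus, $\bar e$ the reverse edge, $[e]$ the undirected edge). Let $(r_i)_{i\in V}$ be positive integers and $u_e\in\mathbb{C}^{r_{t(e)}\times r_{o(e)}}$ for $e\in\vec E$. Define $$Z_G(\boldsymbol u)=\prod_{\mathfrak p\in\mathfrak P_G}\det(I-\pi(\mathfrak p))^{-1},\qquad \pi(\mathfrak p)=u_{e_k}\cdots u_{e_1}\ \text{for }\mathfrak p=(e_1,\dots,e_k),$$ where $\mathfrak P_G$ is the set of prime cycles. Assume $I-u_eu_{\bar e}$ is invertible for every $e$. Then $$Z_G(\boldsymbol u)^{-1}=\det\big(I+\hat{\mathcal D}(\boldsymbol u)-\hat{\mathcal A}(\boldsymbol u)\big)\prod_{[e]\in E}\det(I-u_eu_{\bar e}),$$ where $\hat{\mathcal D}(\boldsymbol u),\hat{\mathcal A}(\boldsymbol u)$ are the operators on $\bigoplus_{i\in V}\mathbb{C}^{r_i}$ $$(\hat{\mathcal D}(\boldsymbol u)g)(i)=\Big(\sum_{e:t(e)=i}(I_{r_i}-u_eu_{\bar e})^{-1}u_eu_{\bar e}\Big)g(i),\qquad(\hat{\mathcal A}(\boldsymbol u)g)(i)=\sum_{e:t(e)=i}(I_{r_i}-u_eu_{\bar e})^{-1}u_e\,g(o(e)),$$ and the product over $[e]\in E$ takes one directed representative per undirected edge.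
   Context: A closed geodesic in $G$ is a sequence $(e_1,\dots,e_k)$ of directed edges with $t(e_l)=o(e_{l+1})$ and $e_{l+1}\ne\bar e_l$ for all $l\in\mathbb{Z}/k\mathbb{Z}$; it is prime if it is not the $m$-fold repetition ($m\ge2$) of a shorter closed geodesic; a prime cycle is a cyclic-permutation equivalence class of prime closed geodesics. The identity is understood as an identity of formal power series in the entries of the $u_e$ (with $Z_G(\boldsymbol u)^{-1}$ equal to $\det(I-\mathcal M)$, where $\mathcal M$ acts on $\bigoplus_{e}\mathbb{C}^{r_{t(e)}}$ by $(\mathcal Mf)(e)=\sum_{e':t(e')=o(e),\,e'\ne\bar e}u_ef(e')$). *)

From mathcomp Require Import all_boot all_order all_algebra.
From mathcomp Require Import complex.
From mathcomp Require Import Rstruct.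

Set Implicit Arguments.
Unset Strict Implicit.
Unset Printing Implicit Defensive.
Import GRing.Theory.
Local Open Scope ring_scope.

Definition C : numClosedFieldType := (Rdefinitions.R)[i].

(* Determinant of an operator on a finite-dimensional space with a
   finite basis indexed by the finType T, given by its matrix entries
   A x y (row x, column y) in that basis.  (Independent of the
   enumeration order of T.) *)
Definition fdet (T : finType) (A : T -> T -> C) : C :=
  \det (\matrix_(a < #|T|, b < #|T|) A (enum_val a) (enum_val b)).

(* Entry (k,l) of a matrix, addressed by natural numbers
   (0 if out of range).  Used to address a block through an index
   whose type is only propositionally equal to the block's dimension. *)
Definition mx_at (m n : nat) (A : 'M[C]_(m, n)) (k l : nat) : C :=
  match (insub k : option 'I_m), (insub l : option 'I_n) with
  | Some a, Some b => A a b
  | _, _ => 0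
  end.

(* ---- Graph data ----
   A finite simple graph on vertex set V : finType is given by an
   adjacency relation adj, symmetric and irreflexive. *)
Definition dedge (V : finType) (adj : rel V) : finType :=
  {p : V * V | adj p.1 p.2}.

Definition org (V : finType) (adj : rel V) (e : dedge adj) : V := (val e).1.
Definition term (V : finType) (adj : rel V) (e : dedge adj) : V := (val e).2.

(* The matrices u_e are given as a family u i j : 'M_(r j, r i),
   u i j being u_e for the directed edge e = (i -> j)
   (so u_e : C^{r_{t(e)} x r_{o(e)}}); values at non-adjacent pairs
   are never used.  u_{\bar e} for e = (i -> j) is u j i. *)

(* Basis of  (+)_{e directed edge} C^{r_{t(e)}}. *)
Definition Ebasis (V : finType) (adj : rel V) (r : V -> nat) : finType :=
  {e : dedge adj & 'I_(r (term e))}.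

(* Basis of  (+)_{i in V} C^{r_i}. *)
Definition Vbasis (V : finType) (r : V -> nat) : finType :=
  {i : V & 'I_(r i)}.

(* The edge operator M on (+)_e C^{r_{t(e)}}:
   (M f)(e) = sum_{e' : t(e') = o(e), e' <> \bar e} u_e f(e'). *)
Definition edgeM (V : finType) (adj : rel V) (r : V -> nat)
    (u : forall i j : V, 'M[C]_(r j, r i))
    (x y : Ebasis adj r) : C :=
  let e := tag x in let e' := tag y in
  if (term e' == org e) && (org e' != term e)
  then mx_at (u (org e) (term e)) (tagged x) (tagged y)
  else 0.

Definition Dblock (V : finType) (adj : rel V) (r : V -> nat)
    (u : forall i j : V, 'M[C]_(r j, r i)) (i : V) : 'M[C]_(r i) :=
  \sum_(j : V | adj j i)
     invmx (1%:M - u j i *m u i j) *m (u j i *m u i j).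

Definition Dhat (V : finType) (adj : rel V) (r : V -> nat)
    (u : forall i j : V, 'M[C]_(r j, r i)) (x y : Vbasis r) : C :=
  if tag x == tag y then Dblock adj u (tag x) (tagged x) (tagged_as x y) else 0.

Definition Ablock (V : finType) (adj : rel V) (r : V -> nat)
    (u : forall i j : V, 'M[C]_(r j, r i)) (i j : V) : 'M[C]_(r i, r j) :=
  if adj j i then invmx (1%:M - u j i *m u i j) *m u j i else 0.

Definition Ahat (V : finType) (adj : rel V) (r : V -> nat)
    (u : forall i j : V, 'M[C]_(r j, r i)) (x y : Vbasis r) : C :=
  Ablock adj u (tag x) (tag y) (tagged x) (tagged y).

(* Z_G(u)^{-1}, which by the paper's convention equals det(I - M). *)
Definition Zinv (V : finType) (adj : rel V) (r : V -> nat)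
    (u : forall i j : V, 'M[C]_(r j, r i)) : C :=
  fdet (fun x y : Ebasis adj r => (x == y)%:R - edgeM u x y).

(* Write I - M = N - T S, where N = I + J for the edge reversal operator
   (J f)(e) = u_e f(\bar e), (T g)(e) = u_e g(o(e)) goes from vertices to
   edges and (S f)(i) = \sum_{t(e) = i} f(e) collects the edges into i.  The
   push-through identity u_e (I - u_{\bar e} u_e)^{-1} = (I - u_e u_{\bar e})^{-1} u_e
   gives T = N P for an explicit P, so det(I - M) = det N det(I - P S) =
   det N det(I - S P), and S P = A - D by direct computation.  Finally N is
   block diagonal over the undirected edges, with blocks [[I, u_e], [u_{\bar e}, I]]
   of determinant det(I - u_e u_{\bar e}). *)

From mathcomp Require Import all_boot all_order all_algebra.
From mathcomp Require Import complex perm Rstruct.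

Set Implicit Arguments.
Unset Strict Implicit.
Unset Printing Implicit Defensive.
Import GRing.Theory.
Local Open Scope ring_scope.

Section DeterminantOnPredicate.
Variables (R : comNzRingType) (T : finType).
Implicit Types (P Q : {pred T}) (A B : T -> T -> R).

Lemma det_conj_perm n (s : 'S_n) (M : 'M[R]_n) :
  \det (\matrix_(i, j) M (s i) (s j)) = \det M.
Proof.
have -> : \matrix_(i, j) M (s i) (s j) = row_perm s (col_perm s M).
  by apply/matrixP => i j; rewrite !mxE.
rewrite row_permE col_permE !det_mulmx !det_perm odd_permV mulrCA mulrA.
by rewrite -mulrA -signr_addb addbb expr0 mulr1.
Qed.

Lemma det_castmx n n' (E : n = n') (M : 'M[R]_n) :
  \det (castmx (E, E) M) = \det M.
Proof. by case: n' / E; rewrite castmx_id. Qed.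

Definition det_on P A : R :=
  \det (\matrix_(a < #|P|, b < #|P|) A (enum_val a) (enum_val b)).

Lemma det_on_reindex P n (h : 'I_n -> T) A :
  injective h -> (forall i, h i \in P) -> (forall x, x \in P -> exists i, h i = x) ->
  det_on P A = \det (\matrix_(a, b) A (h a) (h b)).
Proof.
move=> hinj hP hsurj.
have hn : #|P| = n.
  rewrite -[n]card_ord -(card_codom hinj); apply: eq_card => x.
  by apply/idP/codomP => [/hsurj[i <-] | [i ->]]; [exists i | exact: hP].
pose s0 (a : 'I_#|P|) := enum_rank_in (enum_valP a) (h (cast_ord hn a)).
have s0E a : enum_val (s0 a) = h (cast_ord hn a) by rewrite enum_rankK_in.
have s0inj : injective s0.
  by move=> a b eab; have := s0E a; rewrite eab s0E => /hinj/cast_ord_inj.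
rewrite -(det_castmx (esym hn)) /det_on -(det_conj_perm (perm s0inj)).
congr (\det _); apply/matrixP => i j; rewrite castmxE !mxE !permE !s0E.
by congr (A (h _) (h _)); apply: val_inj.
Qed.

Lemma eq_det_on P P' A B :
  P =i P' -> (forall x y, x \in P -> y \in P -> A x y = B x y) ->
  det_on P A = det_on P' B.
Proof.
move=> eP eAB; rewrite [RHS](@det_on_reindex P' #|P| (@enum_val T P)).
- congr (\det _); apply/matrixP => a b; rewrite !mxE.
  by rewrite eAB ?enum_valP.
- exact: enum_val_inj.
- by move=> i; rewrite -eP enum_valP.
- by move=> x; rewrite -eP => Px; exists (enum_rank_in Px x); rewrite enum_rankK_in.
Qed.

Lemma det_on_id P A :
  (forall x y, x \in P -> y \in P -> A x y = (x == y)%:R) -> det_on P A = 1.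
Proof.
move=> eA; rewrite /det_on -(@det1 R #|P|); congr (\det _).
apply/matrixP => a b; rewrite !mxE eA ?enum_valP //.
by rewrite (inj_eq enum_val_inj).
Qed.

Lemma split_lshift m n (a : 'I_m) : split (lshift n a) = inl a.
Proof. exact: (unsplitK (inl _ a)). Qed.

Lemma split_rshift m n (a : 'I_n) : split (rshift m a) = inr a.
Proof. exact: (unsplitK (inr _ a)). Qed.

Lemma det_on_lower_block P Q A :
  (forall x y, x \in P -> y \in P -> x \in Q -> y \notin Q -> A x y = 0) ->
  det_on P A = det_on [predI P & Q] A * det_on [predD P & Q] A.
Proof.
move=> eA.
pose h (i : 'I_(#|[predI P & Q]| + #|[predD P & Q]|)) : T :=
  match split i with
  | inl a => @enum_val T [predI P & Q] a
  | inr b => @enum_val T [predD P & Q] b end.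
have hP i : h i \in P.
  by rewrite /h; case: (split i) => a; have := enum_valP a; rewrite inE => /andP[].
have hinj : injective h.
  move=> i j; rewrite /h; case: splitP => a Ei; case: splitP => b Ej.
  - by move/enum_val_inj => eab; apply: val_inj; rewrite /= Ei Ej eab.
  - move=> eab; have := enum_valP a; have := enum_valP b.
    by rewrite !inE eab => /andP[Qb _] /andP[_ Qa]; rewrite Qa in Qb.
  - move=> eab; have := enum_valP a; have := enum_valP b.
    by rewrite !inE eab => /andP[_ Qb] /andP[Qa _]; rewrite Qb in Qa.
  - by move/enum_val_inj => eab; apply: val_inj; rewrite /= Ei Ej eab.
have hsurj x : x \in P -> exists i, h i = x.
  move=> Px; case Qx: (x \in Q).
    have xPQ : x \in [predI P & Q] by rewrite inE Px Qx.
    by exists (lshift _ (enum_rank_in xPQ x)); rewrite /h split_lshift enum_rankK_in.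
  have xPQ : x \in [predD P & Q] by rewrite inE Px Qx.
  by exists (rshift _ (enum_rank_in xPQ x)); rewrite /h split_rshift enum_rankK_in.
rewrite (det_on_reindex _ hinj hP hsurj); set M := \matrix_(a, b) _.
rewrite -(submxK M); have -> : ursubmx M = 0.
  apply/matrixP => a b; rewrite !mxE /h split_lshift split_rshift.
  have := enum_valP a; have := enum_valP b; rewrite !inE.
  by move=> /andP[Qb Pb] /andP[Pa Qa]; rewrite eA.
rewrite det_lblock /det_on; congr (_ * _); congr (\det _).
  by apply/matrixP => a b; rewrite !mxE /h !split_lshift.
by apply/matrixP => a b; rewrite !mxE /h !split_rshift.
Qed.

Lemma det_on_partition (K : finType) (f : T -> K) (S : {set K}) P A :
  (forall x, x \in P -> f x \in S) ->
  (forall x y, x \in P -> y \in P -> f x != f y -> A x y = 0) ->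
  det_on P A = \prod_(k in S) det_on [pred x | (x \in P) && (f x == k)] A.
Proof.
have [n] := ubnP #|S|; elim: n S P => // n IH S P /ltnSE leS hS hA.
have [S0 | [k0 k0S]] := set_0Vmem S.
  rewrite S0 big_set0; apply: det_on_id => x y xP.
  by have := hS x xP; rewrite S0 in_set0.
rewrite (det_on_lower_block (Q := [pred x | f x == k0])); last first.
  move=> x y xP yP; rewrite !inE => /eqP fx ne; apply: hA => //.
  by rewrite fx eq_sym.
rewrite (bigD1 k0) //=; congr (_ * _).
rewrite (IH (S :\ k0)).
- apply: eq_big => [k | k /setD1P[nk _]]; first by rewrite in_setD1 andbC.
  apply: eq_det_on => // x; rewrite !inE.
  by case: (f x =P k) => [->|]; rewrite ?nk ?andbF.
- by rewrite (cardsD1 k0) k0S in leS.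
- by move=> x; rewrite !inE => /andP[nx xP]; rewrite nx hS.
- by move=> x y; rewrite !inE => /andP[_ xP] /andP[_ yP]; exact: hA.
Qed.

End DeterminantOnPredicate.

Section MatrixOfFunction.
Variable R : comNzRingType.

Definition mxof (T T' : finType) (A : T -> T' -> R) : 'M[R]_(#|T|, #|T'|) :=
  \matrix_(a, b) A (enum_val a) (enum_val b).

Lemma mxof_mul (T1 T2 T3 : finType) (A : T1 -> T2 -> R) (B : T2 -> T3 -> R) :
  mxof A *m mxof B = mxof (fun x z => \sum_y A x y * B y z).
Proof.
apply/matrixP => a b; rewrite !mxE.
transitivity (\sum_(c < #|T2|) A (enum_val a) (enum_val c) * B (enum_val c) (enum_val b)).
  by apply: eq_bigr => c _; rewrite !mxE.
by rewrite -(big_enum_val (fun y => A (enum_val a) y * B y (enum_val b))) /=.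
Qed.

Lemma mxofB (T1 T2 : finType) (A B : T1 -> T2 -> R) :
  mxof (fun x y => A x y - B x y) = mxof A - mxof B.
Proof. by apply/matrixP => a b; rewrite !mxE. Qed.

Lemma mxof1 (T : finType) : mxof (fun x y : T => (x == y)%:R) = 1%:M.
Proof. by apply/matrixP => a b; rewrite !mxE (inj_eq enum_val_inj). Qed.

Lemma eq_mxof (T1 T2 : finType) (A B : T1 -> T2 -> R) :
  A =2 B -> mxof A = mxof B.
Proof. by move=> eAB; apply/matrixP => a b; rewrite !mxE eAB. Qed.

End MatrixOfFunction.

Lemma fdetE (T : finType) (A : T -> T -> C) : fdet A = \det (mxof A).
Proof. by []. Qed.

Lemma fdet_det_on (T : finType) (A : T -> T -> C) : fdet A = det_on T A.
Proof. by []. Qed.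

Section UnitBlockMatrix.
Variables (R : comNzRingType) (m n : nat) (A : 'M[R]_(m, n)) (B : 'M[R]_(n, m)).

Lemma det_unit_block_mx : \det (block_mx 1%:M A B 1%:M) = \det (1%:M - A *m B).
Proof.
have -> : block_mx 1%:M A B 1%:M
    = block_mx (1%:M - A *m B) A 0 1%:M *m block_mx 1%:M 0 B 1%:M.
  by rewrite mulmx_block !mul1mx !mul0mx !mulmx1 !mulmx0 !add0r subrK.
by rewrite det_mulmx det_ublock det_lblock !det1 !mulr1.
Qed.

Lemma det_unit_block_mx_r : \det (block_mx 1%:M A B 1%:M) = \det (1%:M - B *m A).
Proof.
have -> : block_mx 1%:M A B 1%:M
    = block_mx 1%:M 0 B 1%:M *m block_mx 1%:M A 0 (1%:M - B *m A).
  by rewrite mulmx_block !mul1mx !mul0mx !mulmx1 !addr0 addrC subrK.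
by rewrite det_mulmx det_ublock det_lblock !det1 !mul1r.
Qed.

Lemma det_I_sub_mulmxC : \det (1%:M - A *m B) = \det (1%:M - B *m A).
Proof. by rewrite -det_unit_block_mx det_unit_block_mx_r. Qed.

End UnitBlockMatrix.

Section PushThrough.
Variables (R : comUnitRingType) (m n : nat) (A : 'M[R]_(m, n)) (B : 'M[R]_(n, m)).
Hypotheses (unitAB : 1%:M - A *m B \in unitmx) (unitBA : 1%:M - B *m A \in unitmx).

Lemma mulmx_invmx_push : A *m invmx (1%:M - B *m A) = invmx (1%:M - A *m B) *m A.
Proof.
have e : (1%:M - A *m B) *m A = A *m (1%:M - B *m A).
  by rewrite mulmxBl mulmxBr mul1mx mulmx1 mulmxA.
transitivity (invmx (1%:M - A *m B) *m ((1%:M - A *m B) *m A)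
              *m invmx (1%:M - B *m A)); first by rewrite mulKmx.
by rewrite e mulmxA mulmxK.
Qed.

Lemma resolvent_push_sub :
  invmx (1%:M - A *m B) *m A - A *m (invmx (1%:M - B *m A) *m (B *m A)) = A.
Proof.
rewrite mulmxA mulmx_invmx_push -mulmxA -mulmxBr.
have <- : (1%:M - A *m B) *m A = A - A *m (B *m A).
  by rewrite mulmxBl mul1mx mulmxA.
by rewrite mulKmx.
Qed.

Lemma resolvent_push_mul :
  A *m (invmx (1%:M - B *m A) *m B) = invmx (1%:M - A *m B) *m (A *m B).
Proof. by rewrite mulmxA mulmx_invmx_push mulmxA. Qed.

End PushThrough.

Section DeltaSums.
Variable R : nzRingType.

Lemma sum_sigT (I : finType) (J : I -> finType) (G : {i : I & J i} -> R) :
  \sum_p G p = \sum_i \sum_(j : J i) G (Tagged J j).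
Proof.
rewrite (@sig_big_dep _ _ _ I J xpredT (fun _ => xpredT)
   (fun i j => G (Tagged J j))) /=.
by apply: eq_bigr => -[].
Qed.

Lemma sum_delta_l (T : finType) (x : T) (F : T -> R) :
  \sum_z (x == z)%:R * F z = F x.
Proof.
rewrite (bigD1 x) //= eqxx mul1r big1 ?addr0 // => z /negPf.
by rewrite eq_sym => ->; rewrite mul0r.
Qed.

Lemma sum_delta_nat n (a : nat) (F : nat -> R) : (a < n)%N ->
  \sum_(c < n) (a == c)%:R * F c = F a.
Proof.
move=> an; rewrite -(sum_delta_l (Ordinal an) (fun c : 'I_n => F c)).
by apply: eq_bigr => c _.
Qed.

End DeltaSums.

Lemma mx_atE m n (A : 'M[C]_(m, n)) (i : 'I_m) (j : 'I_n) :
  mx_at A i j = A i j.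
Proof. by rewrite /mx_at !valK. Qed.

Lemma mx_at_mul m n p (A : 'M[C]_(m, n)) (B : 'M[C]_(n, p)) (i k : nat) :
  \sum_(c < n) mx_at A i c * mx_at B c k = mx_at (A *m B) i k.
Proof.
rewrite /mx_at; case: insubP => [i' _ ei|_]; case: insubP => [k' _ ek|_].
- by rewrite mxE; apply: eq_bigr => c _; rewrite valK.
- by apply: big1 => c _; rewrite valK mulr0.
- by apply: big1 => c _; rewrite mul0r.
- by apply: big1 => c _; rewrite mul0r.
Qed.

Lemma mx_atB m n (A B : 'M[C]_(m, n)) i j :
  mx_at (A - B) i j = mx_at A i j - mx_at B i j.
Proof.
rewrite /mx_at; case: (insub i : option 'I_m) => [a|];
  case: (insub j : option 'I_n) => [b|]; by rewrite ?mxE ?subr0.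
Qed.

Section ZetaGraph.
Variables (V : finType) (adj : rel V).
Hypotheses (adj_sym : symmetric adj) (adj_irr : irreflexive adj).
Variables (r : V -> nat) (u : forall i j : V, 'M[C]_(r j, r i)).
Hypothesis unit_u : forall i j : V, adj i j -> 1%:M - u i j *m u j i \in unitmx.

Local Notation E := (dedge adj).
Local Notation X := (Ebasis adj r).
Local Notation Y := (Vbasis r).

Lemma adj_rev (e : E) : adj (val e).2 (val e).1.
Proof. by rewrite adj_sym; exact: valP e. Qed.

Definition rev (e : E) : E :=
  exist (fun p : V * V => adj p.1 p.2) ((val e).2, (val e).1) (adj_rev e).

Lemma revK : involutive rev.
Proof. by move=> e; apply: val_inj; case: e => -[]. Qed.

Lemma org_rev (e : E) : org (rev e) = term e. Proof. by []. Qed.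
Lemma term_rev (e : E) : term (rev e) = org e. Proof. by []. Qed.

Lemma org_neq_term (e : E) : org e != term e.
Proof.
case: e => -[v w] H; rewrite /org /term /=; apply/eqP => evw.
by move: H; rewrite /= evw adj_irr.
Qed.

Lemma eq_rev (e e' : E) : (e' == rev e) = (org e' == term e) && (term e' == org e).
Proof. by case: e e' => -[v w] H [[v' w'] H']; rewrite -val_eqE /= xpair_eqE. Qed.

Definition forward (e : E) : bool := (enum_rank (org e) < enum_rank (term e))%N.

Lemma forward_rev (e : E) : forward (rev e) = ~~ forward e.
Proof.
rewrite /forward org_rev term_rev -leqNgt ltn_neqAle.
by rewrite val_eqE (inj_eq enum_rank_inj) eq_sym org_neq_term.
Qed.

Definition undirected (e : E) : V * V := val (if forward e then e else rev e).

Lemma undirected_rev (e : E) : undirected (rev e) = undirected e.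
Proof. by rewrite /undirected forward_rev revK; case: (forward e). Qed.

Lemma undirected_ordered (e : E) :
  adj (undirected e).1 (undirected e).2 &&
  (enum_rank (undirected e).1 < enum_rank (undirected e).2)%N.
Proof.
rewrite /undirected; case: ifP => fwd; first by rewrite (valP e).
by rewrite (valP (rev e)) -[(_ < _)%N]/(forward (rev e)) forward_rev fwd.
Qed.

(* Besides J, N, T and S, we use
   (P g)(e) = W_e u_e g(o(e)) - W_e u_e u_{\bar e} g(t(e)),
   where W_e = (I - u_e u_{\bar e})^{-1} is [resolvent e]. *)
Definition Jmx (x y : X) : C :=
  if tag y == rev (tag x)
  then mx_at (u (org (tag x)) (term (tag x))) (tagged x) (tagged y) else 0.

Definition Nmx (x y : X) : C := (x == y)%:R + Jmx x y.

Definition Tmx (x : X) (y : Y) : C :=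
  if tag y == org (tag x)
  then mx_at (u (org (tag x)) (term (tag x))) (tagged x) (tagged y) else 0.

Definition Smx (y : Y) (x : X) : C :=
  if term (tag x) == tag y then ((tagged y : nat) == tagged x)%:R else 0.

Definition resolvent (e : E) : 'M[C]_(r (term e)) :=
  invmx (1%:M - u (org e) (term e) *m u (term e) (org e)).

Definition Prow (e : E) (k : nat) (y : Y) : C :=
  (if tag y == org e
   then mx_at (resolvent e *m u (org e) (term e)) k (tagged y) else 0)
  - (if tag y == term e
     then mx_at (resolvent e *m (u (org e) (term e) *m u (term e) (org e))) k (tagged y)
     else 0).

Definition Pmx (x : X) (y : Y) : C := Prow (tag x) (tagged x) y.

Lemma sum_Jmx (x : X) (G : X -> C) :
  \sum_z Jmx x z * G z =
  \sum_(c < r (org (tag x))) mx_at (u (org (tag x)) (term (tag x))) (tagged x) c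
      * G (Tagged (fun e : E => 'I_(r (term e))) (c : 'I_(r (term (rev (tag x)))))).
Proof.
rewrite sum_sigT (bigD1 (rev (tag x))) //= [X in _ + X]big1 ?addr0.
  by apply: eq_bigr => c _; rewrite /Jmx /= eqxx.
by move=> e /negPf ne; apply: big1 => c _; rewrite /Jmx /= ne mul0r.
Qed.

Lemma Nmx_Pmx (x : X) (y : Y) : \sum_z Nmx x z * Pmx z y = Tmx x y.
Proof.
rewrite /Nmx; under eq_bigr => z _ do rewrite mulrDl.
rewrite big_split /= sum_delta_l sum_Jmx.
case: x => -[[v w] H] a; case: y => j b.
rewrite /Pmx /Prow /Tmx /rev /resolvent /org /term /=.
have Hwv : adj w v by rewrite adj_sym.
have nvw : (v == w) = false by apply/negP => /eqP evw; have := H; rewrite /= evw adj_irr.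
have unit_vw := unit_u H; have unit_wv := unit_u Hwv.
case: (j =P v) => [ejv | _].
  subst j; rewrite nvw subr0; under eq_bigr => c _ do rewrite sub0r mulrN.
  by rewrite sumrN mx_at_mul -mx_atB resolvent_push_sub.
case: (j =P w) => [ejw | _].
  subst j; rewrite sub0r; under eq_bigr => c _ do rewrite subr0.
  by rewrite mx_at_mul resolvent_push_mul ?addNr.
by rewrite !subr0 add0r big1 // => c _; rewrite mulr0.
Qed.

Lemma Tmx_Smx (x y : X) : \sum_z Tmx x z * Smx z y =
  if term (tag y) == org (tag x)
  then mx_at (u (org (tag x)) (term (tag x))) (tagged x) (tagged y) else 0.
Proof.
rewrite sum_sigT (bigD1 (org (tag x))) //= [X in _ + X]big1 ?addr0; last first.
  by move=> j /negPf nj; apply: big1 => c _; rewrite /Tmx /= nj mul0r.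
rewrite /Tmx /Smx /=; case: (eqVneq (term (tag y)) (org (tag x))) => [ey | _].
  under eq_bigr => c _ do rewrite eqxx mulrC eq_sym.
  by apply: sum_delta_nat; rewrite -ey.
by apply: big1 => c _; rewrite mulr0.
Qed.

Lemma I_sub_edgeM (x y : X) :
  (x == y)%:R - edgeM u x y = Nmx x y - \sum_z Tmx x z * Smx z y.
Proof.
rewrite Tmx_Smx /Nmx /Jmx /edgeM eq_rev.
by case: (term (tag y) == org (tag x)); case: (org (tag y) == term (tag x));
  rewrite /= ?subr0 ?addrK ?addr0.
Qed.

Lemma sum_into (i : V) (G : E -> C) (Gk : V -> C) :
  (forall k (H : adj k i), G (exist (fun p : V * V => adj p.1 p.2) (k, i) H) = Gk k) ->
  \sum_(e | term e == i) G e = \sum_(k | adj k i) Gk k.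
Proof.
move=> eG; rewrite (partition_big (fun e => org e) xpredT) //= [RHS]big_mkcond.
apply: eq_bigr => k _; case: (boolP (adj k i)) => Hk.
  rewrite (big_pred1 (exist (fun p : V * V => adj p.1 p.2) (k, i) Hk)) ?eG //.
  by move=> -[[v w] Hvw]; rewrite /term /org /= -val_eqE /= xpair_eqE andbC.
rewrite big_pred0 // => -[[v w] Hvw]; rewrite /term /org /=.
apply/negP => /andP[/eqP ew /eqP ev]; move: Hvw; rewrite /= ew ev.
by rewrite (negPf Hk).
Qed.

Lemma Smx_Pmx (x y : Y) :
  \sum_z Smx x z * Pmx z y = Ahat adj u x y - Dhat adj u x y.
Proof.
case: x => i a; case: y => j b; rewrite sum_sigT.
have row_e (e : E) : \sum_(c : 'I_(r (term e)))
     Smx (Tagged (fun i => 'I_(r i)) a) (Tagged (fun e : E => 'I_(r (term e))) c)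
     * Pmx (Tagged (fun e : E => 'I_(r (term e))) c) (Tagged (fun i => 'I_(r i)) b)
  = if term e == i then Prow e a (Tagged (fun i => 'I_(r i)) b) else 0.
  rewrite /Smx /Pmx /=; case: eqP => [ei|_]; last first.
    by apply: big1 => c _; rewrite mul0r.
  by apply: (sum_delta_nat (fun c => Prow e c _)); rewrite ei.
rewrite (eq_bigr _ (fun e _ => row_e e)) -big_mkcond /= /Prow sumrB.
congr (_ - _).
  rewrite (@sum_into i _ (fun k => if j == k then
      mx_at (invmx (1%:M - u k i *m u i k) *m u k i) a b else 0)) //.
  rewrite -big_mkcondr /= /Ahat /Ablock /=.
  case: (boolP (adj j i)) => Hj.
    rewrite (big_pred1 j); first by rewrite mx_atE.
    by move=> k /=; rewrite [j == k]eq_sym; case: (k =P j) => [->|_]; rewrite ?Hj ?andbF.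
  rewrite big_pred0 ?mxE // => k /=.
  by apply/negP => /andP[Hk /eqP ejk]; rewrite ejk Hk in Hj.
rewrite /Dhat /=; case: (i =P j) => [eij | nij]; last first.
  apply: big1 => e /eqP ei; case: eqP => // ejt.
  by case: nij; rewrite -ei -ejt.
subst j; rewrite tagged_asE /Dblock summxE.
apply: (@sum_into i _ (fun k =>
  (invmx (1%:M - u k i *m u i k) *m (u k i *m u i k)) a b)) => k Hk.
by rewrite eqxx mx_atE.
Qed.

Lemma undirected_eqE (e0 e : E) :
  forward e0 -> (undirected e == val e0) = (e == e0) || (e == rev e0).
Proof.
move=> fwd0; rewrite /undirected; case: ifP => fwd.
  have -> : (e == rev e0) = false.
    by apply: contraTF fwd => /eqP ->; rewrite forward_rev fwd0.
  by rewrite orbF.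
have -> : (e == e0) = false by apply: contraFF fwd => /eqP ->.
by rewrite /= -[e in RHS]revK (can_eq revK) -val_eqE.
Qed.

Lemma det_Nmx_block (e0 : E) : forward e0 ->
  det_on [pred x : X | undirected (tag x) == val e0] Nmx
  = \det (1%:M - u (org e0) (term e0) *m u (term e0) (org e0)).
Proof.
move=> fwd0.
have e0_neq_rev : e0 != rev e0.
  by apply/eqP => /(congr1 forward); rewrite forward_rev fwd0.
have rev_neq_e0 : rev e0 != e0 by rewrite eq_sym.
have neq_tag (x y : X) : tag x != tag y -> (x == y) = false.
  by move=> nt; apply: contraNF nt => /eqP ->.
pose h (i : 'I_(r (term e0) + r (org e0))) : X :=
  match split i with
  | inl a => Tagged (fun e : E => 'I_(r (term e))) a
  | inr b => Tagged (fun e : E => 'I_(r (term e))) (b : 'I_(r (term (rev e0))))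
  end.
have hinj : injective h.
  move=> i j; rewrite /h; case: splitP => a Ei; case: splitP => b Ej.
  - by move/eqP; rewrite eq_Tagged /= => /eqP eab; apply: val_inj; rewrite /= Ei Ej eab.
  - by move=> /(congr1 tag) /= /eqP e; case/negP: e0_neq_rev.
  - by move=> /(congr1 tag) /= /eqP e; case/negP: rev_neq_e0.
  - by move/eqP; rewrite eq_Tagged /= => /eqP eab; apply: val_inj; rewrite /= Ei Ej eab.
have hP i : h i \in [pred x : X | undirected (tag x) == val e0].
  by rewrite inE undirected_eqE // /h; case: (split i) => a; rewrite /= eqxx ?orbT.
have hsurj x : x \in [pred x : X | undirected (tag x) == val e0] -> exists i, h i = x.
  case: x => e c; rewrite inE undirected_eqE //= => /orP[] /eqP ee; subst e.
    by exists (lshift _ c); rewrite /h split_lshift.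
  by exists (rshift _ c); rewrite /h split_rshift.
rewrite (det_on_reindex _ hinj hP hsurj) -det_unit_block_mx; congr (\det _).
rewrite -[LHS]submxK; congr block_mx; apply/matrixP => a b;
  rewrite !mxE /h ?split_lshift ?split_rshift /Nmx /Jmx /=.
- by rewrite eq_Tagged ifN ?addr0.
- by rewrite neq_tag ?eqxx ?mx_atE ?add0r.
- by rewrite neq_tag ?revK ?eqxx ?mx_atE ?add0r.
- by rewrite eq_Tagged revK ifN ?addr0.
Qed.

Lemma det_Nmx : \det (mxof Nmx) =
  \prod_(p : V * V | adj p.1 p.2 && (enum_rank p.1 < enum_rank p.2)%N)
     \det (1%:M - u p.1 p.2 *m u p.2 p.1).
Proof.
rewrite -fdetE fdet_det_on (det_on_partition (f := fun x : X => undirected (tag x))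
  (S := [set p : V * V | adj p.1 p.2 && (enum_rank p.1 < enum_rank p.2)%N])).
- apply: eq_big => [p | [p1 p2]]; first by rewrite inE.
  rewrite inE => /andP[Hp Hr].
  pose e0 : E := exist (fun p : V * V => adj p.1 p.2) (p1, p2) Hp.
  rewrite -[RHS](det_Nmx_block (e0 := e0) Hr).
  by apply: eq_det_on.
- by move=> x _; rewrite inE undirected_ordered.
move=> x y _ _ ne; rewrite /Nmx /Jmx.
have -> : (x == y) = false by apply: contraNF ne => /eqP ->.
case: eqP => [ey | _]; last by rewrite addr0.
by case/negP: ne; rewrite ey undirected_rev.
Qed.

Lemma Zinv_factor :
  Zinv adj u =
    fdet (fun x y : Y => (x == y)%:R + Dhat adj u x y - Ahat adj u x y)
    * \prod_(p : V * V | adj p.1 p.2 && (enum_rank p.1 < enum_rank p.2)%N)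
        \det (1%:M - u p.1 p.2 *m u p.2 p.1).
Proof.
have I_sub_M : mxof (fun x y : X => (x == y)%:R - edgeM u x y)
               = mxof Nmx - mxof Tmx *m mxof Smx.
  by rewrite mxof_mul -mxofB; apply: eq_mxof => x y; exact: I_sub_edgeM.
have T_NP : mxof Tmx = mxof Nmx *m mxof Pmx.
  by rewrite mxof_mul; apply: eq_mxof => x y; rewrite Nmx_Pmx.
have I_sub_SP : 1%:M - mxof Smx *m mxof Pmx
                = mxof (fun x y : Y => (x == y)%:R + Dhat adj u x y - Ahat adj u x y).
  rewrite mxof_mul -mxof1 -mxofB; apply: eq_mxof => x y.
  by rewrite Smx_Pmx opprB addrA.
rewrite /Zinv !fdetE I_sub_M T_NP -mulmxA -{1}(mulmx1 (mxof Nmx)) -mulmxBr.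
by rewrite det_mulmx det_I_sub_mulmxC I_sub_SP mulrC det_Nmx.
Qed.

End ZetaGraph.

Unset Implicit Arguments.

Theorem corollary1 (V : finType) (adj : rel V)
    (adj_sym : symmetric adj) (adj_irr : irreflexive adj)
    (r : V -> nat) (r_pos : forall i, (0 < r i)%N)
    (u : forall i j : V, 'M[C]_(r j, r i))
    (hinv : forall i j : V, adj i j -> (1%:M - u i j *m u j i) \in unitmx) :
  Zinv adj u =
    fdet (fun x y : Vbasis r => (x == y)%:R + Dhat adj u x y - Ahat adj u x y)
    * \prod_(p : V * V | adj p.1 p.2 && (enum_rank p.1 < enum_rank p.2)%N)
        \det (1%:M - u p.1 p.2 *m u p.2 p.1).
Proof. exact: (Zinv_factor adj_sym adj_irr hinv). Qed.
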